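(* Let $(P_n(x))_{n\ge0}$ be a sequence of polynomials such that $\sum_{n\ge0}P_n(x)\frac{t^n}{n!}=f(t)e^{xt}$ for some $f$ holomorphic at $0$ with $f(0)\neq0$, and such that $P_n(1-x)=(-1)^nP_n(x)$ for all $n\ge0$. Let $N$ be a positive integer. If the function $F(t)=f(t)-\sum_{k=0}^{N}E_k(0)\frac{t^k}{k!}$ is odd, then $P_n(x)=E_n(x)$ for all $n\ge0$ and $f(t)=\frac{2}{e^t+1}$.
   Context: $E_n(x)$ denotes the Euler polynomials, defined by $\sum_{n\ge0}E_n(x)\frac{t^n}{n!}=\frac{2e^{xt}}{e^t+1}$. *)

From Stdlib Require Import Reals.
From Coquelicot Require Import Coquelicot.

Open Scope C_scope.

Definition cexp (z : C) : C :=
  RtoC (exp (Re z)) * (RtoC (cos (Im z)) + Ci * RtoC (sin (Im z))).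

Definition cfact (n : nat) : C := RtoC (INR (Stdlib.Arith.Factorial.fact n)).

Definition is_poly_fun (p : C -> C) : Prop :=
  exists (d : nat) (a : nat -> C), forall x : C, p x = sum_n (fun k => a k * x ^ k) d.

Definition holomorphic_at0 (f : C -> C) : Prop :=
  exists r : R, (0 < r)%R /\ forall t : C, (Cmod t < r)%R -> ex_derive f t.

Definition egf_identity (Q : nat -> C -> C) (g : C -> C -> C) : Prop :=
  forall x : C, exists r : R, (0 < r)%R /\
    forall t : C, (Cmod t < r)%R ->
      is_series (fun n => Q n x * t ^ n / cfact n) (g x t).

Definition euler_polys (E : nat -> C -> C) : Prop :=
  (forall n, is_poly_fun (E n)) /\
  egf_identity E (fun x t => 2 * cexp (x * t) / (cexp t + 1)).

From Stdlib Require Import Reals Lra.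
From Coquelicot Require Import Coquelicot.
Open Scope C_scope.

(* Putting x = 0 in the symmetry P_n(1 - x) = (-1)^n P_n(x) gives f(t) e^t = f(-t).
   The generating function g(t) = 2/(e^t + 1) of the E_n(0) satisfies g(t) + g(-t) = 2,
   so E_n(0) (1 + (-1)^n) = 0 for n > 0 and every Taylor polynomial S_N of g satisfies
   S_N(t) + S_N(-t) = 2.  Oddness of f - S_N then yields f(t) + f(-t) = 2, that is
   f(t) (e^t + 1) = 2, and since P and E now have the same generating function,
   P_n = E_n by uniqueness of power series coefficients. *)

Definition near0 (P : C -> Prop) : Prop :=
  exists r : R, (0 < r)%R /\ forall t : C, (Cmod t < r)%R -> P t.

Lemma near0_impl (P Q : C -> Prop) : (forall t, P t -> Q t) -> near0 P -> near0 Q.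
Proof. intros HPQ [r [Hr HP]]. exists r. split; auto. Qed.

Lemma near0_and (P Q : C -> Prop) : near0 P -> near0 Q -> near0 (fun t => P t /\ Q t).
Proof.
  intros [r1 [Hr1 HP]] [r2 [Hr2 HQ]].
  exists (Rmin r1 r2). split; [now apply Rmin_pos |].
  intros t Ht. split.
  - apply HP. eapply Rlt_le_trans; [exact Ht | apply Rmin_l].
  - apply HQ. eapply Rlt_le_trans; [exact Ht | apply Rmin_r].
Qed.

Lemma near0_opp (P : C -> Prop) : near0 P -> near0 (fun t => P (- t)).
Proof. intros [r [Hr HP]]. exists r. split; auto. intros t Ht. apply HP. now rewrite Cmod_opp. Qed.

Lemma Cmod_Im_le (t : C) : (Rabs (Im t) <= Cmod t)%R.
Proof.
  replace (Im t) with (- Re (Ci * t))%R by (destruct t; simpl; ring).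
  rewrite Rabs_Ropp. eapply Rle_trans; [apply re_le_Cmod |].
  rewrite Cmod_mult, Cmod_Ci. lra.
Qed.

Lemma Cpow_opp (x : C) (n : nat) : (- x) ^ n = (-1) ^ n * x ^ n.
Proof. rewrite <- Cpow_mult_l. f_equal. ring. Qed.

Lemma cexp_0 : cexp 0 = 1.
Proof. unfold cexp; simpl. rewrite exp_0, cos_0, sin_0. apply injective_projections; simpl; ring. Qed.

Lemma cexp_mul_opp (t : C) : cexp t * cexp (- t) = 1.
Proof.
  destruct t as [a b]. unfold cexp; simpl. rewrite cos_neg, sin_neg.
  assert (He : (exp a * exp (- a) = 1)%R) by (rewrite <- exp_plus, Rplus_opp_r; apply exp_0).
  pose proof (sin2_cos2 b) as Hsc. unfold Rsqr in Hsc.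
  apply injective_projections; simpl; nra.
Qed.

Lemma cexp_add1_neq0 (t : C) : (Cmod t < 1)%R -> cexp t + 1 <> 0.
Proof.
  intros Ht H. apply (f_equal Re) in H. unfold cexp in H; simpl in H.
  pose proof (Cmod_Im_le t) as HIm. pose proof PI2_1.
  assert (Hcos : (0 < cos (Im t))%R) by (apply cos_gt_0; apply Rabs_def2; lra).
  pose proof (exp_pos (Re t)). nra.
Qed.

Lemma is_series_C_unique (u : nat -> C) (l1 l2 : C) :
  is_series u l1 -> is_series u l2 -> l1 = l2.
Proof.
  exact (@filterlim_locally_unique nat C_AbsRing C_NormedModule eventually
           (Proper_StrongProper _ eventually_filter) (sum_n u) l1 l2).
Qed.

Lemma sum_n_Re_Im (u : nat -> C) (n : nat) :
  sum_n (fun k => Re (u k)) n = Re (sum_n u n) /\ sum_n (fun k => Im (u k)) n = Im (sum_n u n).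
Proof.
  induction n as [|n [IHre IHim]]; [now rewrite !sum_O |].
  rewrite !sum_Sn, IHre, IHim. now split.
Qed.

Lemma is_series_Re_Im (u : nat -> C) (l : C) :
  is_series u l -> is_series (fun n => Re (u n)) (Re l) /\ is_series (fun n => Im (u n)) (Im l).
Proof.
  intros H. split; apply filterlim_locally; intros eps;
    generalize (proj1 (filterlim_locally _ _) H eps); apply filter_imp;
    intros n [Hre Him].
  - rewrite (proj1 (sum_n_Re_Im _ _)). exact Hre.
  - rewrite (proj2 (sum_n_Re_Im _ _)). exact Him.
Qed.

Local Open Scope R_scope.

Lemma pseries_eq0_coef_R (b : nat -> R) (r : R) : 0 < r ->
  (forall t : R, Rabs t < r -> is_series (fun n => b n * t ^ n) 0) ->
  forall n, b n = 0.
Proof.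
  intros Hr Hb n.
  assert (Hrad : Rbar_lt 0 (CV_radius b)).
  { assert (Hlim : is_lim_seq (fun k => b k * (r / 2) ^ k) 0).
    { apply ex_series_lim_0. eexists. apply Hb. rewrite Rabs_pos_eq; lra. }
    assert (Hge : Rbar_le (r / 2) (CV_radius b)).
    { apply Rbar_not_lt_le. intros Hlt. apply (CV_disk_outside b (r / 2)); [|exact Hlim].
      rewrite Rabs_pos_eq; [exact Hlt | lra]. }
    eapply Rbar_lt_le_trans; [| exact Hge]. simpl. lra. }
  assert (Hloc : Derive_n (PSeries b) n 0 = Derive_n (fun _ => 0) n 0).
  { apply Derive_n_ext_loc. exists (mkposreal r Hr). intros t Ht.
    apply is_pseries_unique, is_pseries_R, Hb.
    replace t with (t - 0) by ring. exact Ht. }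
  assert (Hconst : Derive_n (fun _ : R => 0) n 0 = 0) by (destruct n; [reflexivity | apply Derive_n_const]).
  pose proof (Derive_n_coef b n Hrad) as Hcoef.
  rewrite Hloc, Hconst in Hcoef.
  pose proof (INR_fact_neq_0 n). nra.
Qed.

Local Open Scope C_scope.

Lemma pseries_eq0_coef_C (a : nat -> C) :
  near0 (fun t => is_series (fun n => a n * t ^ n) (0 : C)) -> forall n, a n = 0.
Proof.
  intros [r [Hr Ha]] n.
  assert (Hparts : forall t : R, (Rabs t < r)%R ->
    is_series (fun k => Re (a k) * t ^ k)%R 0%R /\ is_series (fun k => Im (a k) * t ^ k)%R 0%R).
  { intros t Ht. rewrite <- Cmod_R in Ht.
    destruct (is_series_Re_Im _ _ (Ha _ Ht)) as [Hre Him].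
    split; [eapply is_series_ext; [| exact Hre] | eapply is_series_ext; [| exact Him]];
      intros k; cbv beta; rewrite <- RtoC_pow; destruct (a k); simpl; ring. }
  apply injective_projections; simpl.
  - apply (pseries_eq0_coef_R (fun k => Re (a k)) r Hr). apply Hparts.
  - apply (pseries_eq0_coef_R (fun k => Im (a k)) r Hr). apply Hparts.
Qed.

Lemma cfact_neq0 (n : nat) : cfact n <> 0.
Proof. intros H. apply (f_equal Re) in H. exact (INR_fact_neq_0 n H). Qed.

Lemma egf_coef_unique (a b : nat -> C) (g : C -> C) :
  near0 (fun t => is_series (fun n => a n * t ^ n / cfact n) (g t)) ->
  near0 (fun t => is_series (fun n => b n * t ^ n / cfact n) (g t)) ->
  forall n, a n = b n.
Proof.
  intros Ha Hb n.
  assert (Hdiff : forall k, (a k - b k) / cfact k = 0).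
  { apply pseries_eq0_coef_C. eapply near0_impl; [| exact (near0_and _ _ Ha Hb)].
    intros t [Hat Hbt]. replace (0 : C) with (minus (g t) (g t)) by (rewrite minus_eq_zero; reflexivity).
    eapply is_series_ext; [| exact (is_series_minus _ _ _ _ Hat Hbt)].
    intros k. pose proof (cfact_neq0 k). change (a k * t ^ k / cfact k - b k * t ^ k / cfact k
      = (a k - b k) / cfact k * t ^ k). field. assumption. }
  pose proof (cfact_neq0 n) as Hn. specialize (Hdiff n).
  replace (a n) with ((a n - b n) / cfact n * cfact n + b n) by (field; exact Hn).
  rewrite Hdiff. ring.
Qed.

Definition const_coef (c : C) (n : nat) : C := match n with O => c | S _ => 0 end.

Lemma sum_n_const_coef (c t : C) (N : nat) :
  sum_n (fun k => const_coef c k * t ^ k / cfact k) N = c.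
Proof.
  induction N as [|N IH].
  - rewrite sum_O. unfold cfact; simpl. field.
  - rewrite sum_Sn, IH. change (c + 0 * t ^ S N / cfact (S N) = c). unfold Cdiv. ring.
Qed.

Lemma is_series_const_coef (c t : C) :
  is_series (fun k => const_coef c k * t ^ k / cfact k) c.
Proof.
  eapply filterlim_ext; [intros N; symmetry; apply sum_n_const_coef | apply filterlim_const].
Qed.

Lemma euler_gf0_even_part (t : C) :
  (Cmod t < 1)%R -> 2 / (cexp t + 1) + 2 / (cexp (- t) + 1) = 2.
Proof.
  intros Ht. pose proof (cexp_mul_opp t) as Hinv.
  pose proof (cexp_add1_neq0 t Ht).
  pose proof (cexp_add1_neq0 (- t) ltac:(now rewrite Cmod_opp)).
  field [Hinv]. auto.
Qed.

Lemma euler_coef_at0 (E : nat -> C -> C) (HE : euler_polys E) (n : nat) :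
  E n 0 * (1 + (-1) ^ n) = const_coef 2 n.
Proof.
  destruct HE as [_ HEgf].
  apply (egf_coef_unique (fun k => E k 0 * (1 + (-1) ^ k)) (const_coef 2) (fun _ => 2)).
  - assert (Hsmall : near0 (fun t => (Cmod t < 1)%R)) by (exists 1%R; split; [lra | auto]).
    eapply near0_impl;
      [| exact (near0_and _ _ Hsmall (near0_and _ _ (HEgf 0) (near0_opp _ (HEgf 0))))].
    intros t [Ht [Hpos Hneg]].
    rewrite !Cmult_0_l, cexp_0, Cmult_1_r in Hpos, Hneg.
    rewrite <- (euler_gf0_even_part t Ht).
    eapply is_series_ext; [| exact (is_series_plus _ _ _ _ Hpos Hneg)].
    intros k. pose proof (cfact_neq0 k).
    change (E k 0 * t ^ k / cfact k + E k 0 * (- t) ^ k / cfact k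
      = E k 0 * (1 + (-1) ^ k) * t ^ k / cfact k).
    rewrite Cpow_opp. field. assumption.
  - exists 1%R. split; [lra |]. intros t _. apply is_series_const_coef.
Qed.

Definition euler_taylor_at0 (E : nat -> C -> C) (N : nat) (s : C) : C :=
  sum_n (fun k => E k 0 * s ^ k / cfact k) N.

Lemma euler_taylor_at0_even_part (E : nat -> C -> C) (HE : euler_polys E) (N : nat) (t : C) :
  euler_taylor_at0 E N t + euler_taylor_at0 E N (- t) = 2.
Proof.
  unfold euler_taylor_at0. rewrite <- (sum_n_const_coef 2 t N).
  change (plus (sum_n (fun k => E k 0 * t ^ k / cfact k) N)
               (sum_n (fun k => E k 0 * (- t) ^ k / cfact k) N)
          = sum_n (fun k => const_coef 2 k * t ^ k / cfact k) N).
  rewrite <- sum_n_plus. apply sum_n_ext. intros k.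
  rewrite <- (euler_coef_at0 E HE k), Cpow_opp. pose proof (cfact_neq0 k).
  change (E k 0 * t ^ k / cfact k + E k 0 * ((-1) ^ k * t ^ k) / cfact k
    = E k 0 * (1 + (-1) ^ k) * t ^ k / cfact k).
  field. assumption.
Qed.

Lemma egf_reflection (Q : nat -> C -> C) (g : C -> C -> C) :
  egf_identity Q g -> (forall n x, Q n (1 - x) = (-1) ^ n * Q n x) ->
  near0 (fun t => g 1 t = g 0 (- t)).
Proof.
  intros Hg Hsym. eapply near0_impl; [| exact (near0_and _ _ (Hg 1) (near0_opp _ (Hg 0)))].
  intros t [H1 H0]. apply (is_series_C_unique _ _ _ H1).
  eapply is_series_ext; [| exact H0]. intros n.
  assert (HQ1 : Q n 1 = (-1) ^ n * Q n 0) by (rewrite <- Hsym; f_equal; ring).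
  change (Q n 0 * (- t) ^ n / cfact n = Q n 1 * t ^ n / cfact n).
  rewrite HQ1, Cpow_opp. unfold Cdiv. ring.
Qed.

Lemma euler_gf_of_odd_remainder (E : nat -> C -> C) (HE : euler_polys E) (f : C -> C) (N : nat) :
  near0 (fun t => f t * cexp t = f (- t)) ->
  near0 (fun t => f (- t) - euler_taylor_at0 E N (- t) = - (f t - euler_taylor_at0 E N t)) ->
  near0 (fun t => f t = 2 / (cexp t + 1)).
Proof.
  intros Hrefl Hodd. eapply near0_impl; [| exact (near0_and _ _ Hrefl Hodd)].
  intros t [Hr Ho].
  assert (Hprod : f t * (cexp t + 1) = 2).
  { rewrite <- (euler_taylor_at0_even_part E HE N t).
    transitivity (f (- t) + f t); [rewrite <- Hr; ring |].
    replace (f (- t) + f t)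
      with (f (- t) - euler_taylor_at0 E N (- t) + f t + euler_taylor_at0 E N (- t)) by ring.
    rewrite Ho. ring. }
  assert (Hnz : cexp t + 1 <> 0).
  { intros H. rewrite H, Cmult_0_r in Hprod. apply (f_equal Re) in Hprod. simpl in Hprod. lra. }
  rewrite <- Hprod. field. exact Hnz.
Qed.

Theorem mainTheorem6 (E : nat -> C -> C) (HE : euler_polys E)
  (P : nat -> C -> C) (f : C -> C) (N : nat)
  (HP : forall n, is_poly_fun (P n))
  (Hf : holomorphic_at0 f) (Hf0 : f 0 <> 0)
  (Hgf : egf_identity P (fun x t => f t * cexp (x * t)))
  (Hsym : forall (n : nat) (x : C), P n (1 - x) = (-1) ^ n * P n x)
  (HN : (0 < N)%nat)
  (Hodd : exists r : R, (0 < r)%R /\ forall t : C, (Cmod t < r)%R ->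
     let F := fun s => f s - sum_n (fun k => E k 0 * s ^ k / cfact k) N in
     F (- t) = - F t) :
  (forall (n : nat) (x : C), P n x = E n x) /\
  (exists r : R, (0 < r)%R /\ forall t : C, (Cmod t < r)%R -> f t = 2 / (cexp t + 1)).
Proof.
  assert (Hrefl : near0 (fun t => f t * cexp t = f (- t))).
  { eapply near0_impl; [| exact (egf_reflection P _ Hgf Hsym)].
    intros t; cbv beta. rewrite Cmult_1_l, Cmult_0_l, cexp_0, Cmult_1_r. auto. }
  assert (Hfgf : near0 (fun t => f t = 2 / (cexp t + 1)))
    by exact (euler_gf_of_odd_remainder E HE f N Hrefl Hodd).
  split; [| exact Hfgf].
  intros n x. destruct HE as [_ HEgf].
  apply (egf_coef_unique (fun k => P k x) (fun k => E k x) (fun t => f t * cexp (x * t)));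
    [exact (Hgf x) |].
  eapply near0_impl; [| exact (near0_and _ _ Hfgf (HEgf x))].
  intros t [-> HEt].
  replace (2 / (cexp t + 1) * cexp (x * t)) with (2 * cexp (x * t) / (cexp t + 1))
    by (unfold Cdiv; ring).
  exact HEt.
Qed.
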